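(* Let $a=\sum_{t=0}^7a_te_t\in C\ell_{1,2}$ be nonzero with $P(a)=0$, let $K=a_0^2+a_2^2+a_4^2+a_6^2$ and $x=\frac{a'}{4K}$. Then $axa=a$, $xax=x$, $(ax)'=ax$ and $(xa)'=xa$.
   Context: $C\ell_{1,2}$ is the real Clifford algebra generated by $i_1,i_2,i_3$ with $i_1^2=1$, $i_2^2=i_3^2=-1$ and $i_ti_m=-i_mi_t$ for $t\neq m$, with real basis $e_0=1$, $e_1=i_1$, $e_2=i_2$, $e_3=i_1i_2$, $e_4=i_3$, $e_5=i_1i_3$, $e_6=i_2i_3$, $e_7=i_1i_2i_3$. For $a=\sum a_te_t$: the prime is $a'=a_0+a_1e_1-a_2e_2+a_3e_3-a_4e_4+a_5e_5-a_6e_6-a_7e_7$; $N(a)=a_0^2-a_1^2+a_2^2-a_3^2+a_4^2-a_5^2+a_6^2-a_7^2$, $T(a)=a_0a_7+a_2a_5-a_1a_6-a_3a_4$, $P(a)=N(a)^2+4T(a)^2$. *)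

From HB Require Import structures.
From mathcomp Require Import all_boot all_order all_algebra.
Set Implicit Arguments. Unset Strict Implicit. Unset Printing Implicit Defensive.
Import Order.TTheory GRing.Theory Num.Theory.
Local Open Scope ring_scope.

(* The basis index
   t in {0..7}, written in binary b2 b1 b0, is the blade i_1^{b0} i_2^{b1} i_3^{b2}:
   e0=1, e1=i1, e2=i2, e3=i1i2, e4=i3, e5=i1i3, e6=i2i3, e7=i1i2i3. *)
Definition cl12 (R : Type) := {ffun 'I_8 -> R}.

(* bit j (0-based) of t : generator i_{j+1} occurs in blade t *)
Definition bitn (t j : nat) : bool := odd (t %/ 2 ^ j).

(* number of transpositions needed to reorder e_s * e_u into canonical order:
   pairs (generator p in s, generator q in u) with p > q *)
Definition nswaps (s u : nat) : nat :=
  \sum_(p < 3) \sum_(q < 3) [&& bitn s p, bitn u q & (q < p)%N].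

(* common generators with negative square: i2^2 = i3^2 = -1 (i1^2 = 1) *)
Definition nnegsq (s u : nat) : nat :=
  \sum_(p < 3) [&& bitn s p, bitn u p & (0 < p)%N].

(* e_s * e_u = blade_sign s u * e_(s xor u) *)
Definition blade_sign (R : pzRingType) (s u : nat) : R :=
  (-1) ^+ (nswaps s u + nnegsq s u).

Definition clmul (R : pzRingType) (a b : cl12 R) : cl12 R :=
  [ffun k : 'I_8 => \sum_(s < 8) \sum_(u < 8)
      (if Nat.lxor s u == k :> nat then blade_sign R s u * a s * b u else 0)].

Definition clscale (R : pzRingType) (c : R) (a : cl12 R) : cl12 R :=
  [ffun k => c * a k].

Definition co (R : Type) (a : cl12 R) (t : nat) : R := a (inord t).

Definition clprime (R : pzRingType) (a : cl12 R) : cl12 R :=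
  [ffun k : 'I_8 => (if (k : nat) \in [:: 2; 4; 6; 7]%N then - a k else a k)].

Definition clN (R : pzRingType) (a : cl12 R) : R :=
  co a 0 ^+ 2 - co a 1 ^+ 2 + co a 2 ^+ 2 - co a 3 ^+ 2
  + co a 4 ^+ 2 - co a 5 ^+ 2 + co a 6 ^+ 2 - co a 7 ^+ 2.

Definition clT (R : pzRingType) (a : cl12 R) : R :=
  co a 0 * co a 7 + co a 2 * co a 5 - co a 1 * co a 6 - co a 3 * co a 4.

Definition clP (R : pzRingType) (a : cl12 R) : R :=
  clN a ^+ 2 + 4 * clT a ^+ 2.

From HB Require Import structures.
From mathcomp Require Import all_boot all_order all_algebra.
From mathcomp Require Import ring lra.
From Stdlib Require PeanoNat.
Import Order.TTheory GRing.Theory Num.Theory.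
Set Implicit Arguments.
Unset Strict Implicit.
Unset Printing Implicit Defensive.
Local Open Scope ring_scope.

(* Write N, T, K for clN a, clT a, clK a, and alpha for the automorphism
   i1 |-> -i1 of Cl_{1,2}.  A coordinate computation gives
     a a' a = 4K a - N (2a + alpha a) - 2T e7 (alpha a),
   and over a real field P(a) = N^2 + 4T^2 = 0 forces N = T = 0, hence
   a a' a = 4K a.  Moreover K <> 0 when a <> 0, since N = 0 makes K equal to
   the sum of the squares of the odd-index coordinates.  As the prime is an
   involutive anti-automorphism, a' a a' = 4K a' is the prime of a a' a = 4K a,
   and the four identities for x = a'/(4K) follow formally. *)

(* Keeps [/=] from unfolding coordinates into finfun internals while it
   evaluates index arithmetic. *)
#[local] Arguments co : simpl never.

Lemma lxorK s u : Nat.lxor s (Nat.lxor s u) = u.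
Proof.
by rewrite -PeanoNat.Nat.lxor_assoc PeanoNat.Nat.lxor_nilpotent PeanoNat.Nat.lxor_0_l.
Qed.

Lemma lxor_ltn8 s k : (s < 8)%N -> (k < 8)%N -> (Nat.lxor s k < 8)%N.
Proof. by case: s => [|[|[|[|[|[|[|[|s]]]]]]]]; case: k => [|[|[|[|[|[|[|[|k]]]]]]]]. Qed.

Lemma nswapsE s u : nswaps s u =
  ((bitn s 1 && bitn u 0) + (bitn s 2 && bitn u 0) + (bitn s 2 && bitn u 1))%N.
Proof.
rewrite /nswaps !big_ord_recr !big_ord0 /=.
by case: (bitn s 0); case: (bitn s 1); case: (bitn s 2);
   case: (bitn u 0); case: (bitn u 1); case: (bitn u 2).
Qed.

Lemma nnegsqE s u : nnegsq s u = ((bitn s 1 && bitn u 1) + (bitn s 2 && bitn u 2))%N.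
Proof.
rewrite /nnegsq !big_ord_recr !big_ord0 /=.
by case: (bitn s 0); case: (bitn s 1); case: (bitn s 2);
   case: (bitn u 0); case: (bitn u 1); case: (bitn u 2).
Qed.

Definition clK (R : pzRingType) (a : cl12 R) : R :=
  co a 0 ^+ 2 + co a 2 ^+ 2 + co a 4 ^+ 2 + co a 6 ^+ 2.

(* alpha: the blades containing i1 are exactly those of odd index. *)
Definition clneg1 (R : pzRingType) (a : cl12 R) : cl12 R :=
  [ffun k : 'I_8 => if odd k then - a k else a k].

Definition clvol (R : pzRingType) : cl12 R := [ffun k : 'I_8 => (k == 7 :> nat)%:R].

Section Coordinates.
Variable R : comPzRingType.
Implicit Types (a b : cl12 R) (c : R).

Lemma cl12_ext a b :
  co a 0 = co b 0 -> co a 1 = co b 1 -> co a 2 = co b 2 -> co a 3 = co b 3 ->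
  co a 4 = co b 4 -> co a 5 = co b 5 -> co a 6 = co b 6 -> co a 7 = co b 7 -> a = b.
Proof.
move=> e0 e1 e2 e3 e4 e5 e6 e7; apply/ffunP => k.
have: co a k = co b k by case: k => [[|[|[|[|[|[|[|[|//]]]]]]]]] ?.
by rewrite /co inord_val.
Qed.

Lemma co_clmul a b k : (k < 8)%N -> co (clmul a b) k =
  \sum_(s < 8) blade_sign R s (Nat.lxor s k) * co a s * co b (Nat.lxor s k).
Proof.
move=> k_lt8; rewrite {1}/co ffunE inordK //; apply: eq_bigr => s _.
have xor_lt8 := lxor_ltn8 (ltn_ord s) k_lt8.
rewrite (bigD1 (inord (Nat.lxor s k))) /= ?inordK ?lxorK ?eqxx // big1 ?addr0.
  by rewrite /co inord_val.
move=> u; rewrite -val_eqE /= inordK // => /negbTE neq_u; case: eqP => // xor_su.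
by move: neq_u; rewrite -xor_su lxorK eqxx.
Qed.

Lemma co_clmul0 a b : co (clmul a b) 0 =
  co a 0 * co b 0 + co a 1 * co b 1 - co a 2 * co b 2 + co a 3 * co b 3
     - co a 4 * co b 4 + co a 5 * co b 5 - co a 6 * co b 6 - co a 7 * co b 7.
Proof.
by rewrite co_clmul // !big_ord_recr big_ord0 /= /blade_sign !nswapsE !nnegsqE /=; ring.
Qed.

Lemma co_clmul1 a b : co (clmul a b) 1 =
  co a 0 * co b 1 + co a 1 * co b 0 + co a 2 * co b 3 - co a 3 * co b 2
     + co a 4 * co b 5 - co a 5 * co b 4 - co a 6 * co b 7 - co a 7 * co b 6.
Proof.
by rewrite co_clmul // !big_ord_recr big_ord0 /= /blade_sign !nswapsE !nnegsqE /=; ring.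
Qed.

Lemma co_clmul2 a b : co (clmul a b) 2 =
  co a 0 * co b 2 + co a 1 * co b 3 + co a 2 * co b 0 - co a 3 * co b 1
     + co a 4 * co b 6 - co a 5 * co b 7 - co a 6 * co b 4 - co a 7 * co b 5.
Proof.
by rewrite co_clmul // !big_ord_recr big_ord0 /= /blade_sign !nswapsE !nnegsqE /=; ring.
Qed.

Lemma co_clmul3 a b : co (clmul a b) 3 =
  co a 0 * co b 3 + co a 1 * co b 2 - co a 2 * co b 1 + co a 3 * co b 0
     - co a 4 * co b 7 + co a 5 * co b 6 - co a 6 * co b 5 - co a 7 * co b 4.
Proof.
by rewrite co_clmul // !big_ord_recr big_ord0 /= /blade_sign !nswapsE !nnegsqE /=; ring.
Qed.

Lemma co_clmul4 a b : co (clmul a b) 4 =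
  co a 0 * co b 4 + co a 1 * co b 5 - co a 2 * co b 6 + co a 3 * co b 7
     + co a 4 * co b 0 - co a 5 * co b 1 + co a 6 * co b 2 + co a 7 * co b 3.
Proof.
by rewrite co_clmul // !big_ord_recr big_ord0 /= /blade_sign !nswapsE !nnegsqE /=; ring.
Qed.

Lemma co_clmul5 a b : co (clmul a b) 5 =
  co a 0 * co b 5 + co a 1 * co b 4 + co a 2 * co b 7 - co a 3 * co b 6
     - co a 4 * co b 1 + co a 5 * co b 0 + co a 6 * co b 3 + co a 7 * co b 2.
Proof.
by rewrite co_clmul // !big_ord_recr big_ord0 /= /blade_sign !nswapsE !nnegsqE /=; ring.
Qed.

Lemma co_clmul6 a b : co (clmul a b) 6 =
  co a 0 * co b 6 + co a 1 * co b 7 + co a 2 * co b 4 - co a 3 * co b 5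
     - co a 4 * co b 2 + co a 5 * co b 3 + co a 6 * co b 0 + co a 7 * co b 1.
Proof.
by rewrite co_clmul // !big_ord_recr big_ord0 /= /blade_sign !nswapsE !nnegsqE /=; ring.
Qed.

Lemma co_clmul7 a b : co (clmul a b) 7 =
  co a 0 * co b 7 + co a 1 * co b 6 - co a 2 * co b 5 + co a 3 * co b 4
     + co a 4 * co b 3 - co a 5 * co b 2 + co a 6 * co b 1 + co a 7 * co b 0.
Proof.
by rewrite co_clmul // !big_ord_recr big_ord0 /= /blade_sign !nswapsE !nnegsqE /=; ring.
Qed.

Definition co_clmulE :=
  (co_clmul0, co_clmul1, co_clmul2, co_clmul3, co_clmul4, co_clmul5, co_clmul6, co_clmul7).

Lemma co_clprime a k : (k < 8)%N ->
  co (clprime a) k = if k \in [:: 2; 4; 6; 7]%N then - co a k else co a k.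
Proof. by move=> k_lt8; rewrite /co ffunE inordK. Qed.

Lemma co_clneg1 a k : (k < 8)%N -> co (clneg1 a) k = if odd k then - co a k else co a k.
Proof. by move=> k_lt8; rewrite /co ffunE inordK. Qed.

Lemma co_clvol k : (k < 8)%N -> co (clvol R) k = (k == 7)%:R.
Proof. by move=> k_lt8; rewrite /co ffunE inordK. Qed.

Lemma co_clscale c a k : co (clscale c a) k = c * co a k.
Proof. by rewrite /co ffunE. Qed.

Lemma co_add a b k : co (a + b) k = co a k + co b k.
Proof. by rewrite /co ffunE. Qed.

Lemma co_opp a k : co (- a) k = - co a k.
Proof. by rewrite /co ffunE. Qed.

Lemma co0 k : co (0 : cl12 R) k = 0.
Proof. by rewrite /co ffunE. Qed.

End Coordinates.

Section Algebra.
Variable R : comPzRingType.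
Implicit Types (a b : cl12 R) (c d : R).

Lemma clscale1 a : clscale 1 a = a.
Proof. by apply/ffunP => k; rewrite ffunE mul1r. Qed.

Lemma clscale0 a : clscale 0 a = 0.
Proof. by apply/ffunP => k; rewrite !ffunE mul0r. Qed.

Lemma clscaleA c d a : clscale c (clscale d a) = clscale (c * d) a.
Proof. by apply/ffunP => k; rewrite !ffunE mulrA. Qed.

Lemma clmulA a b e : clmul a (clmul b e) = clmul (clmul a b) e.
Proof. by apply: cl12_ext; rewrite !co_clmulE; ring. Qed.

Lemma clmulZl c a b : clmul (clscale c a) b = clscale c (clmul a b).
Proof. by apply: cl12_ext; rewrite !co_clscale !co_clmulE !co_clscale; ring. Qed.

Lemma clmulZr c a b : clmul a (clscale c b) = clscale c (clmul a b).
Proof. by apply: cl12_ext; rewrite !co_clscale !co_clmulE !co_clscale; ring. Qed.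

Lemma clprimeZ c a : clprime (clscale c a) = clscale c (clprime a).
Proof. by apply: cl12_ext; rewrite !(co_clprime, co_clscale) //=; ring. Qed.

Lemma clprimeK : involutive (@clprime R).
Proof. by move=> a; apply: cl12_ext; rewrite !co_clprime //= opprK. Qed.

Lemma clprime_mul a b : clprime (clmul a b) = clmul (clprime b) (clprime a).
Proof. by apply: cl12_ext; rewrite !co_clprime //= !co_clmulE !co_clprime //=; ring. Qed.

Lemma clmul_prime_sandwich a :
  clmul (clmul a (clprime a)) a =
    clscale (4 * clK a) a - clscale (clN a) (clscale 2 a + clneg1 a)
      - clscale (2 * clT a) (clmul (clvol R) (clneg1 a)).
Proof.
apply: cl12_ext; rewrite !(co_add, co_opp, co_clscale) !co_clmulE;
  by rewrite !co_clprime // !co_clneg1 // !co_clvol //= /clK /clN /clT; ring.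
Qed.

End Algebra.

Lemma clprime_scaled_mp_inverse (F : fieldType) (a : cl12 F) k :
  k != 0 -> clmul (clmul a (clprime a)) a = clscale k a ->
  let x := clscale k^-1 (clprime a) in
  [/\ clmul (clmul a x) a = a, clmul (clmul x a) x = x,
      clprime (clmul a x) = clmul a x & clprime (clmul x a) = clmul x a].
Proof.
move=> k_neq0 aa'a x.
have a'aa' : clmul (clmul (clprime a) a) (clprime a) = clscale k (clprime a).
  by rewrite -clmulA -{2}(clprimeK a) -!clprime_mul aa'a clprimeZ.
rewrite /x; split.
- by rewrite clmulZr clmulZl aa'a clscaleA mulVf // clscale1.
- by rewrite !clmulZl clmulZr a'aa' !clscaleA -mulrA mulVf // mulr1.
- by rewrite clmulZr clprimeZ clprime_mul clprimeK.
- by rewrite clmulZl clprimeZ clprime_mul clprimeK.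
Qed.

Section Real.
Variable R : realDomainType.
Implicit Types a : cl12 R.

Lemma clP_eq0 a : clP a = 0 -> clN a = 0 /\ clT a = 0.
Proof.
rewrite /clP => P0; move: (sqr_ge0 (clN a)) (sqr_ge0 (clT a)) => N2 T2.
by split; apply/eqP; rewrite -sqrf_eq0; apply/eqP; lra.
Qed.

Lemma clK_neq0 a : a != 0 -> clN a = 0 -> clK a != 0.
Proof.
move=> a_neq0; rewrite /clN /clK => N0; apply: contra_neq a_neq0 => K0.
move: (sqr_ge0 (co a 0)) (sqr_ge0 (co a 1)) (sqr_ge0 (co a 2)) (sqr_ge0 (co a 3)).
move: (sqr_ge0 (co a 4)) (sqr_ge0 (co a 5)) (sqr_ge0 (co a 6)) (sqr_ge0 (co a 7)).
move=> s4 s5 s6 s7 s0 s1 s2 s3.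
by apply: cl12_ext; rewrite co0; apply/eqP; rewrite -sqrf_eq0; apply/eqP; lra.
Qed.

End Real.

Theorem lemma3p4 (R : realFieldType) (a : cl12 R) :
  a != 0 -> clP a = 0 ->
  let K := co a 0 ^+ 2 + co a 2 ^+ 2 + co a 4 ^+ 2 + co a 6 ^+ 2 in
  let x := clscale (4 * K)^-1 (clprime a) in
  [/\ clmul (clmul a x) a = a,
      clmul (clmul x a) x = x,
      clprime (clmul a x) = clmul a x
    & clprime (clmul x a) = clmul x a].
Proof.
move=> a_neq0 /clP_eq0[N0 T0].
apply: (@clprime_scaled_mp_inverse _ a (4 * clK a)).
  by rewrite mulf_neq0 ?pnatr_eq0 ?clK_neq0.
by rewrite clmul_prime_sandwich N0 T0 mulr0 !clscale0 !subr0.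
Qed.
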